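(* Let $Y$ be a complete CAT$(0)$ space, let $C_1, C_2 \subseteq Y$ be nonempty, closed and convex, and let $r_1,r_2>0$. If there exists $z \in Y$ such that $C_1, C_2 \subseteq B(z,r_1)$, then for any $x \in B(z,r_2)$, \[d(P_{C_1}(x), P_{C_2}(x))^2 \le 2(r_1 + r_2)H(C_1,C_2).\]
   Context: A CAT$(0)$ space is a geodesic space in which every geodesic triangle is no fatter than its Euclidean comparison triangle. A subset is convex if it contains every geodesic segment joining two of its points. $B(z,r)$ is the closed ball. For nonempty closed convex $C$ in a complete CAT$(0)$ space, $P_C(x)$ denotes the unique point of $C$ nearest to $x$ (metric projection). $H(B,C)=\max\{\sup_{b\in B}\mathrm{dist}(b,C),\sup_{c\in C}\mathrm{dist}(c,B)\}$ is the Pompeiu–Hausdorff distance. *)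

From Stdlib Require Import Reals List.
From Coquelicot Require Import Coquelicot.
Open Scope R_scope.

Section Metric.
Context {X : Type} (d : X -> X -> R).

Definition is_metric : Prop :=
  (forall x y, 0 <= d x y) /\ (forall x y, d x y = 0 <-> x = y) /\
  (forall x y, d x y = d y x) /\ (forall x y z, d x z <= d x y + d y z).

Definition geodesic_seg (x y : X) (g : R -> X) : Prop :=
  g 0 = x /\ g (d x y) = y /\
  forall s t, 0 <= s <= d x y -> 0 <= t <= d x y -> d (g s) (g t) = Rabs (s - t).

Definition geodesic_space : Prop := forall x y, exists g, geodesic_seg x y g.

Definition edist (a b : R * R) : R :=
  sqrt ((fst a - fst b) ^ 2 + (snd a - snd b) ^ 2).

(** a side of a geodesic triangle together with its comparison side:
    endpoints u v, geodesic g, comparison endpoints a b in R^2 *)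
Record side := mkSide { s_u : X; s_v : X; s_g : R -> X; s_a : R * R; s_b : R * R }.

(** comparison point in R^2 of the point (s_g S t) of the side S *)
Definition cmp_point (S : side) (t : R) : R * R :=
  (fst (s_a S) + t / d (s_u S) (s_v S) * (fst (s_b S) - fst (s_a S)),
   snd (s_a S) + t / d (s_u S) (s_v S) * (snd (s_b S) - snd (s_a S))).

Definition CAT0 : Prop :=
  geodesic_space /\
  forall (x y z : X) (gxy gyz gzx : R -> X) (a b c : R * R),
    geodesic_seg x y gxy -> geodesic_seg y z gyz -> geodesic_seg z x gzx ->
    edist a b = d x y -> edist b c = d y z -> edist c a = d z x ->
    forall S1 S2 : side,
      In S1 (mkSide x y gxy a b :: mkSide y z gyz b c :: mkSide z x gzx c a :: nil) ->
      In S2 (mkSide x y gxy a b :: mkSide y z gyz b c :: mkSide z x gzx c a :: nil) ->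
      forall s t, 0 <= s <= d (s_u S1) (s_v S1) -> 0 <= t <= d (s_u S2) (s_v S2) ->
        d (s_g S1 s) (s_g S2 t) <= edist (cmp_point S1 s) (cmp_point S2 t).

Definition metric_complete : Prop :=
  forall u : nat -> X,
    (forall eps, 0 < eps -> exists N, forall m n, (N <= m)%nat -> (N <= n)%nat ->
        d (u m) (u n) < eps) ->
    exists l, forall eps, 0 < eps -> exists N, forall n, (N <= n)%nat -> d (u n) l < eps.

Definition nonempty_set (C : X -> Prop) : Prop := exists c, C c.

Definition m_closed_set (C : X -> Prop) : Prop :=
  forall x, (forall eps, 0 < eps -> exists c, C c /\ d x c < eps) -> C x.

Definition g_convex_set (C : X -> Prop) : Prop :=
  forall x y g, C x -> C y -> geodesic_seg x y g ->
    forall t, 0 <= t <= d x y -> C (g t).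

Definition cball (z : X) (r : R) : X -> Prop := fun x => d z x <= r.

(** p is the metric projection P_C(x): a point of C nearest to x
    (unique in a complete CAT(0) space) *)
Definition is_proj (C : X -> Prop) (x p : X) : Prop :=
  C p /\ forall c, C c -> d x p <= d x c.

Definition dist_set (x : X) (C : X -> Prop) : Rbar :=
  Glb_Rbar (fun r => exists c, C c /\ r = d x c).

Definition Rbar_max2 (a b : Rbar) : Rbar :=
  match Rbar_le_dec a b with left _ => b | right _ => a end.

Definition hausdorff (B C : X -> Prop) : Rbar :=
  Rbar_max2 (Lub_Rbar (fun r => exists b, B b /\ Finite r = dist_set b C))
            (Lub_Rbar (fun r => exists c, C c /\ Finite r = dist_set c B)).

End Metric.

From Stdlib Require Import Reals Lra Lia List.
From Coquelicot Require Import Coquelicot.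
Open Scope R_scope.

(* The CAT(0) comparison yields the CN inequality, hence (through midpoints) the
   quadrilateral inequality d(a,e)^2 + d(b,c)^2 <= d(a,c)^2 + d(b,e)^2 + d(a,b)^2 + d(c,e)^2,
   and, for a projection p = P_C(x) and q in C, the obtuse-angle inequality
   d(x,p)^2 + d(p,q)^2 <= d(x,q)^2.  Moving q to an arbitrary point w in steps of a
   small length s (the quadrilateral inequality costs 2 s^2 per step) and comparing
   with a point at distance s from p on [p,x] gives the variational inequality
   d(x,p)^2 + d(p,w)^2 - d(x,w)^2 <= 2 d(x,p) d(w,q).
   Applied to P_{C_1}(x) with w = P_{C_2}(x) and vice versa, and added, it gives
   d(p1,p2)^2 <= (r1 + r2) (d(p2,q1) + d(p1,q2)) for all q1 in C1, q2 in C2;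
   taking infima, the right-hand side is at most 2 (r1 + r2) H(C1,C2). *)

Lemma edist_eq (a b : R * R) (r : R) :
  0 <= r -> (fst a - fst b) ^ 2 + (snd a - snd b) ^ 2 = r ^ 2 -> edist a b = r.
Proof. intros Hr E. unfold edist. rewrite E. now apply sqrt_pow2. Qed.

Lemma edist_sq (a b : R * R) :
  edist a b ^ 2 = (fst a - fst b) ^ 2 + (snd a - snd b) ^ 2.
Proof. unfold edist. apply pow2_sqrt, Rplus_le_le_0_compat; apply pow2_ge_0. Qed.

Lemma euclidean_triangle_exists (A B D : R) :
  0 < D -> B <= A + D -> A <= B + D -> D <= A + B ->
  exists P : R * R, fst P ^ 2 + snd P ^ 2 = A ^ 2 /\ (D - fst P) ^ 2 + snd P ^ 2 = B ^ 2.
Proof.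
  intros HD T1 T2 T3.
  set (X := (D ^ 2 + A ^ 2 - B ^ 2) / (2 * D)).
  assert (HX : 0 <= A ^ 2 - X ^ 2).
  { replace (A ^ 2 - X ^ 2) with ((B ^ 2 - (A - D) ^ 2) * ((A + D) ^ 2 - B ^ 2) / (4 * D ^ 2))
      by (unfold X; field; lra).
    apply Rmult_le_pos; [apply Rmult_le_pos; nra | apply Rlt_le, Rinv_0_lt_compat; nra]. }
  exists (X, sqrt (A ^ 2 - X ^ 2)); unfold fst, snd.
  rewrite pow2_sqrt by exact HX. split; [ring | unfold X; field; lra].
Qed.

Lemma le_0_of_le_mult_all (a b : R) :
  0 <= b -> (forall l, 0 < l <= 1 -> a <= l * b) -> a <= 0.
Proof.
  intros Hb H. destruct (Rle_or_lt a 0) as [Ha | Ha]; [exact Ha |].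
  assert (Hl : 0 < a / (a + b) <= 1).
  { split; [apply Rdiv_lt_0_compat; lra | apply (Rdiv_le_1 a (a + b)); lra]. }
  specialize (H _ Hl).
  replace (a / (a + b) * b) with (a * b / (a + b)) in H by (field; lra).
  apply (Rmult_le_compat_r (a + b)) in H; [| lra].
  replace (a * b / (a + b) * (a + b)) with (a * b) in H by (field; lra). nra.
Qed.

Lemma le_mult_add_of_glb {T U : Type} (A : T -> Prop) (B : U -> Prop) (f : T -> R)
    (g : U -> R) (k m e1 e2 : R) :
  0 < k ->
  (forall a b, A a -> B b -> m <= k * (f a + g b)) ->
  (forall l, (forall a, A a -> l <= f a) -> l <= e1) ->
  (forall l, (forall b, B b -> l <= g b) -> l <= e2) ->
  m <= k * (e1 + e2).
Proof.
  intros Hk H H1 H2.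
  enough (m / k - e1 <= e2).
  { apply (Rmult_le_reg_l (/ k)); [apply Rinv_0_lt_compat; lra |].
    replace (/ k * (k * (e1 + e2))) with (e1 + e2) by (field; lra).
    unfold Rdiv in *. lra. }
  apply H2. intros b Hb.
  enough (m / k - g b <= e1) by lra.
  apply H1. intros a Ha. specialize (H a b Ha Hb).
  apply (Rmult_le_reg_l k); [lra |].
  replace (k * (m / k - g b)) with (m - k * g b) by (field; lra). lra.
Qed.

Lemma Rbar_le_mult_of_le_add (k m e1 e2 : R) (h : Rbar) :
  0 < k -> m <= k * (e1 + e2) -> Rbar_le e1 h -> Rbar_le e2 h ->
  Rbar_le m (Rbar_mult (2 * k) h).
Proof.
  intros Hk Hm H1 H2.
  destruct h as [h | |]; simpl in H1, H2 |- *; try contradiction.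
  - nra.
  - unfold Rbar_mult'. destruct (Rle_dec 0 (2 * k)) as [P | P]; [| lra].
    destruct (Rle_lt_or_eq_dec 0 (2 * k) P); simpl; [trivial | lra].
Qed.

Section MetricSpace.

Context {Y : Type} {d : Y -> Y -> R} (Hmetric : is_metric d).

Lemma dist_ge0 x y : 0 <= d x y.
Proof. apply Hmetric. Qed.

Lemma dist_eq0 x y : d x y = 0 <-> x = y.
Proof. apply Hmetric. Qed.

Lemma dist_sym x y : d x y = d y x.
Proof. apply Hmetric. Qed.

Lemma dist_triangle x y z : d x z <= d x y + d y z.
Proof. apply Hmetric. Qed.

Lemma geodesic_dist_start u v g t :
  geodesic_seg d u v g -> 0 <= t <= d u v -> d u (g t) = t.
Proof.
  intros [Hg0 [_ Hiso]] Ht. rewrite <- Hg0 at 1.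
  rewrite Hiso by lra. rewrite Rabs_left1 by lra. ring.
Qed.

Lemma geodesic_dist_end u v g t :
  geodesic_seg d u v g -> 0 <= t <= d u v -> d (g t) v = d u v - t.
Proof.
  intros [_ [Hg1 Hiso]] Ht. rewrite <- Hg1 at 1.
  rewrite Hiso by lra. rewrite Rabs_left1 by lra. ring.
Qed.

Lemma is_proj_geodesic (C : Y -> Prop) x p g t :
  is_proj d C x p -> geodesic_seg d p x g -> 0 <= t <= d p x -> is_proj d C (g t) p.
Proof.
  intros [Hp Hmin] Hg Ht. split; [exact Hp |]. intros c Hc.
  pose proof (Hmin c Hc). pose proof (dist_triangle x (g t) c).
  rewrite (dist_sym (g t) p), (dist_sym x (g t)), (geodesic_dist_start p x g t Hg Ht),
    (geodesic_dist_end p x g t Hg Ht), (dist_sym x p) in *.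
  lra.
Qed.

Lemma dist_le_of_cball z r1 r2 x c :
  cball d z r2 x -> cball d z r1 c -> d x c <= r1 + r2.
Proof.
  unfold cball. intros Hx Hc. pose proof (dist_triangle x z c).
  rewrite (dist_sym x z) in *. lra.
Qed.

Lemma dist_set_spec u (C : Y -> Prop) c0 :
  C c0 -> exists e, dist_set d u C = Finite e /\
    (forall m, (forall c, C c -> m <= d u c) -> m <= e).
Proof.
  intros Hc0. unfold dist_set.
  set (S := fun r => exists c, C c /\ r = d u c).
  destruct (Glb_Rbar_correct S) as [Hlb Hglb].
  assert (L0 : Rbar_le 0 (Glb_Rbar S)).
  { apply Hglb. intros r [c [_ ->]]. apply dist_ge0. }
  assert (L1 : Rbar_le (Glb_Rbar S) (d u c0)) by (apply Hlb; now exists c0).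
  destruct (Glb_Rbar S) as [e | |]; simpl in L0, L1; try contradiction.
  exists e. split; [reflexivity |].
  intros m Hm. apply (Hglb (Finite m)). intros r [c [Hc ->]]. now apply Hm.
Qed.

End MetricSpace.

Lemma dist_set_le_hausdorff_l {Y : Type} (d : Y -> Y -> R) (C1 C2 : Y -> Prop) b e :
  C1 b -> dist_set d b C2 = Finite e -> Rbar_le e (hausdorff d C1 C2).
Proof.
  intros Hb He. unfold hausdorff, Rbar_max2.
  set (L1 := Lub_Rbar _). set (L2 := Lub_Rbar _).
  assert (HL1 : Rbar_le e L1) by (apply Lub_Rbar_correct; now exists b).
  destruct (Rbar_le_dec L1 L2); [now apply Rbar_le_trans with L1 | exact HL1].
Qed.

Lemma dist_set_le_hausdorff_r {Y : Type} (d : Y -> Y -> R) (C1 C2 : Y -> Prop) c e :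
  C2 c -> dist_set d c C1 = Finite e -> Rbar_le e (hausdorff d C1 C2).
Proof.
  intros Hc He. unfold hausdorff, Rbar_max2.
  set (L1 := Lub_Rbar _). set (L2 := Lub_Rbar _).
  assert (HL2 : Rbar_le e L2) by (apply Lub_Rbar_correct; now exists c).
  destruct (Rbar_le_dec L1 L2) as [_ | Hlt]; [exact HL2 |].
  apply Rbar_le_trans with L2; [exact HL2 | now apply Rbar_lt_le, Rbar_not_le_lt].
Qed.

Section CAT0Space.

Context {Y : Type} {d : Y -> Y -> R} (Hmetric : is_metric d) (Hcat : CAT0 d).

Lemma CN_ineq u v g p t :
  geodesic_seg d u v g -> 0 < d u v -> 0 <= t <= d u v ->
  d p (g t) ^ 2 <= (1 - t / d u v) * d p u ^ 2 + t / d u v * d p v ^ 2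
                   - t / d u v * (1 - t / d u v) * d u v ^ 2.
Proof.
  intros Hg HD Ht.
  destruct (proj1 Hcat v p) as [gvp Hvp]. destruct (proj1 Hcat p u) as [gpu Hpu].
  destruct (euclidean_triangle_exists (d p u) (d p v) (d u v)) as [[X Z] [EA EB]];
    cbn [fst snd] in *.
  { exact HD. }
  { apply (dist_triangle Hmetric). }
  { rewrite (dist_sym Hmetric u v). apply (dist_triangle Hmetric). }
  { rewrite (dist_sym Hmetric p u). apply (dist_triangle Hmetric). }
  assert (E1 : edist (0, 0) (d u v, 0) = d u v) by (apply edist_eq; cbn [fst snd]; [lra | ring]).
  assert (E2 : edist (d u v, 0) (X, Z) = d v p).
  { apply edist_eq; cbn [fst snd]; [apply (dist_ge0 Hmetric) |].
    rewrite (dist_sym Hmetric v p), <- EB. ring. }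
  assert (E3 : edist (X, Z) (0, 0) = d p u).
  { apply edist_eq; cbn [fst snd]; [apply (dist_ge0 Hmetric) |]. rewrite <- EA. ring. }
  pose proof (proj2 Hcat u v p g gvp gpu (0, 0) (d u v, 0) (X, Z) Hg Hvp Hpu E1 E2 E3
     (mkSide u v g (0, 0) (d u v, 0)) (mkSide p u gpu (X, Z) (0, 0))
     (in_eq _ _) (in_cons _ _ _ (in_cons _ _ _ (in_eq _ _))) t 0) as Hcmp.
  cbn [s_u s_v s_g] in Hcmp. destruct Hpu as [Hgpu0 _]. rewrite Hgpu0 in Hcmp.
  specialize (Hcmp Ht (conj (Rle_refl 0) (dist_ge0 Hmetric p u))).
  rewrite (dist_sym Hmetric p (g t)).
  apply Rle_trans with (edist (cmp_point d (mkSide u v g (0, 0) (d u v, 0)) t)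
                              (cmp_point d (mkSide p u gpu (X, Z) (0, 0)) 0) ^ 2).
  { apply pow_incr. split; [apply (dist_ge0 Hmetric) | exact Hcmp]. }
  rewrite edist_sq. unfold cmp_point; cbn [fst snd s_a s_b s_u s_v]. rewrite Rdiv_0_l.
  apply Req_le. rewrite <- EA, <- EB. field. lra.
Qed.

Lemma CN_midpoint u v g p :
  geodesic_seg d u v g ->
  d p (g (d u v / 2)) ^ 2 <= (d p u ^ 2 + d p v ^ 2) / 2 - d u v ^ 2 / 4.
Proof.
  intros Hg. destruct (Req_dec (d u v) 0) as [E | E].
  - destruct Hg as [Hg0 _]. rewrite E, Rdiv_0_l, Hg0.
    apply (dist_eq0 Hmetric) in E. subst v. nra.
  - assert (HD : 0 < d u v) by (pose proof (dist_ge0 Hmetric u v); lra).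
    assert (Ht : 0 <= d u v / 2 <= d u v) by lra.
    pose proof (CN_ineq u v g p (d u v / 2) Hg HD Ht) as H.
    replace (d u v / 2 / d u v) with (1 / 2) in H by (field; lra). lra.
Qed.

Lemma quadrilateral_ineq a b c e :
  d a e ^ 2 + d b c ^ 2 <= d a c ^ 2 + d b e ^ 2 + d a b ^ 2 + d c e ^ 2.
Proof.
  destruct (proj1 Hcat a e) as [g Hg]. set (m := g (d a e / 2)).
  pose proof (CN_midpoint a e g b Hg) as Hb. pose proof (CN_midpoint a e g c Hg) as Hc.
  fold m in Hb, Hc.
  rewrite (dist_sym Hmetric b a), (dist_sym Hmetric b m) in Hb.
  rewrite (dist_sym Hmetric c a) in Hc.
  assert (Hbc : d b c <= d m b + d c m).
  { rewrite (dist_sym Hmetric m b), (dist_sym Hmetric c m). apply (dist_triangle Hmetric). }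
  pose proof (dist_ge0 Hmetric b c). pose proof (dist_ge0 Hmetric m b).
  pose proof (dist_ge0 Hmetric c m).
  assert (Hsq : d b c ^ 2 <= (d m b + d c m) ^ 2) by (apply pow_incr; lra).
  pose proof (pow2_ge_0 (d m b - d c m)).
  nra.
Qed.

Lemma proj_pythagoras_le (C : Y -> Prop) y p c :
  g_convex_set d C -> is_proj d C y p -> C c -> d y p ^ 2 + d p c ^ 2 <= d y c ^ 2.
Proof.
  intros Hconv [Hp Hmin] Hc.
  destruct (Req_dec (d p c) 0) as [E | E].
  { rewrite E. apply (dist_eq0 Hmetric) in E. subst c. nra. }
  assert (HD : 0 < d p c) by (pose proof (dist_ge0 Hmetric p c); lra).
  destruct (proj1 Hcat p c) as [g Hg].
  enough (d y p ^ 2 + d p c ^ 2 - d y c ^ 2 <= 0) by lra.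
  apply (le_0_of_le_mult_all _ (d p c ^ 2)); [apply pow2_ge_0 |].
  intros l Hl.
  assert (Ht : 0 <= l * d p c <= d p c) by nra.
  pose proof (CN_ineq p c g y (l * d p c) Hg HD Ht) as Hcn.
  replace (l * d p c / d p c) with l in Hcn by (field; lra).
  assert (Hnear : d y p ^ 2 <= d y (g (l * d p c)) ^ 2).
  { apply pow_incr. split; [apply (dist_ge0 Hmetric) | apply Hmin, (Hconv p c g Hp Hc Hg _ Ht)]. }
  apply (Rmult_le_reg_l l); [lra |]. nra.
Qed.

Lemma sq_dist_diff_along_geodesic p y q w g N :
  geodesic_seg d q w g -> d q w = INR N * d p y ->
  (d y q ^ 2 - d p q ^ 2) - (d y w ^ 2 - d p w ^ 2) <= 2 * d p y * d q w.
Proof.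
  intros Hg HN. set (s := d p y) in *.
  assert (Hs : 0 <= s) by apply (dist_ge0 Hmetric).
  destruct Hg as [Hg0 [Hgw Hiso]].
  assert (Hstep : forall n, (n <= N)%nat ->
    (d y q ^ 2 - d p q ^ 2) - (d y (g (INR n * s)) ^ 2 - d p (g (INR n * s)) ^ 2)
      <= INR n * (2 * s ^ 2)).
  { induction n as [| n IH]; intros Hn.
    - cbn [INR]. rewrite Rmult_0_l, Hg0. lra.
    - specialize (IH ltac:(lia)).
      pose proof (le_INR _ _ Hn) as HnN. pose proof (pos_INR n) as Hn0.
      rewrite S_INR in HnN |- *.
      assert (Hc : 0 <= INR n * s <= d q w) by nra.
      assert (He : 0 <= (INR n + 1) * s <= d q w) by nra.
      pose proof (quadrilateral_ineq p y (g (INR n * s)) (g ((INR n + 1) * s))) as Q.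
      rewrite (Hiso _ _ Hc He) in Q.
      replace (Rabs (INR n * s - (INR n + 1) * s)) with s in Q
        by (rewrite Rabs_left1 by nra; ring).
      fold s in Q. nra. }
  specialize (Hstep N (le_n N)). rewrite <- HN, Hgw in Hstep.
  rewrite HN. nra.
Qed.

Lemma proj_variational_ineq (C : Y -> Prop) x p w q :
  g_convex_set d C -> is_proj d C x p -> C q ->
  d x p ^ 2 + d p w ^ 2 - d x w ^ 2 <= 2 * d x p * d w q.
Proof.
  intros Hconv Hproj Hq.
  destruct (Req_dec (d x p) 0) as [Ea | Ea].
  { rewrite Ea. apply (dist_eq0 Hmetric) in Ea. subst x. nra. }
  destruct (Req_dec (d w q) 0) as [Eh | Eh].
  { rewrite Eh. apply (dist_eq0 Hmetric) in Eh. subst w.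
    pose proof (proj_pythagoras_le C x p q Hconv Hproj Hq). lra. }
  assert (Ha : 0 < d x p) by (pose proof (dist_ge0 Hmetric x p); lra).
  assert (Hh : 0 < d w q) by (pose proof (dist_ge0 Hmetric w q); lra).
  destruct (archimed_cor1 (d x p / d w q)) as [N [HN HN0]];
    [apply Rdiv_lt_0_compat; lra |].
  assert (HNpos : 0 < INR N) by (apply lt_0_INR; exact HN0).
  set (s := d w q / INR N).
  assert (Hs0 : 0 < s) by (apply Rdiv_lt_0_compat; lra).
  assert (Hsa : s <= d p x).
  { rewrite (dist_sym Hmetric p x). unfold s.
    apply (Rmult_lt_compat_l (d w q)) in HN; [| lra].
    replace (d w q * (d x p / d w q)) with (d x p) in HN by (field; lra).
    unfold Rdiv. lra. }
  destruct (proj1 Hcat p x) as [gx Hgx].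
  assert (Hst : 0 <= s <= d p x) by lra.
  set (y := gx s).
  assert (Hpy : d p y = s) by apply (geodesic_dist_start p x gx s Hgx Hst).
  pose proof (proj_pythagoras_le C y p q Hconv (is_proj_geodesic Hmetric C x p gx s Hproj Hgx Hst) Hq)
    as Hobtuse.
  destruct (proj1 Hcat q w) as [gw Hgw].
  assert (HqN : d q w = INR N * d p y).
  { rewrite Hpy, (dist_sym Hmetric q w). unfold s. field. lra. }
  pose proof (sq_dist_diff_along_geodesic p y q w gw N Hgw HqN) as Hdiff.
  assert (HD : 0 < d p x) by lra.
  pose proof (CN_ineq p x gx w s Hgx HD Hst) as Hcn. fold y in Hcn.
  rewrite (dist_sym Hmetric p x) in Hcn, Hsa.
  rewrite (dist_sym Hmetric y p), Hpy in Hobtuse.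
  rewrite Hpy, (dist_sym Hmetric q w) in Hdiff.
  rewrite (dist_sym Hmetric w y), (dist_sym Hmetric w p), (dist_sym Hmetric w x) in Hcn.
  set (l := s / d x p) in Hcn.
  assert (Hsl : s = l * d x p) by (unfold l; field; lra).
  assert (Hl : 0 < l) by (unfold l; apply Rdiv_lt_0_compat; lra).
  clearbody l y s. subst s.
  apply (Rmult_le_reg_l l); [exact Hl |]. nra.
Qed.

Lemma proj_dist_sq_le (C1 C2 : Y -> Prop) x p1 p2 q1 q2 r :
  g_convex_set d C1 -> g_convex_set d C2 -> is_proj d C1 x p1 -> is_proj d C2 x p2 ->
  d x p1 <= r -> d x p2 <= r -> C1 q1 -> C2 q2 ->
  d p1 p2 ^ 2 <= r * (d p2 q1 + d p1 q2).
Proof.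
  intros Hconv1 Hconv2 Hp1 Hp2 Hr1 Hr2 Hq1 Hq2.
  pose proof (proj_variational_ineq C1 x p1 p2 q1 Hconv1 Hp1 Hq1) as K1.
  pose proof (proj_variational_ineq C2 x p2 p1 q2 Hconv2 Hp2 Hq2) as K2.
  rewrite (dist_sym Hmetric p2 p1) in K2.
  pose proof (dist_ge0 Hmetric p2 q1). pose proof (dist_ge0 Hmetric p1 q2).
  nra.
Qed.

End CAT0Space.

Theorem lemma4p2 (Y : Type) (d : Y -> Y -> R) (C1 C2 : Y -> Prop) (r1 r2 : R) :
  is_metric d -> CAT0 d -> metric_complete d ->
  nonempty_set C1 -> m_closed_set d C1 -> g_convex_set d C1 ->
  nonempty_set C2 -> m_closed_set d C2 -> g_convex_set d C2 ->
  0 < r1 -> 0 < r2 ->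
  forall z : Y,
    (forall c, C1 c -> cball d z r1 c) -> (forall c, C2 c -> cball d z r1 c) ->
    forall x p1 p2 : Y,
      cball d z r2 x -> is_proj d C1 x p1 -> is_proj d C2 x p2 ->
      Rbar_le (Finite (d p1 p2 ^ 2))
              (Rbar_mult (Finite (2 * (r1 + r2))) (hausdorff d C1 C2)).
Proof.
  intros Hmetric Hcat _ _ _ Hconv1 _ _ Hconv2 Hr1 Hr2 z Hball1 Hball2 x p1 p2 Hx Hp1 Hp2.
  destruct (dist_set_spec Hmetric p2 C1 p1 (proj1 Hp1)) as [e1 [He1 Hglb1]].
  destruct (dist_set_spec Hmetric p1 C2 p2 (proj1 Hp2)) as [e2 [He2 Hglb2]].
  apply (Rbar_le_mult_of_le_add (r1 + r2) _ e1 e2); [lra | | |].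
  - apply (le_mult_add_of_glb C1 C2 (d p2) (d p1)); [lra | | exact Hglb1 | exact Hglb2].
    intros q1 q2 Hq1 Hq2.
    apply (proj_dist_sq_le Hmetric Hcat C1 C2 x); auto;
      eapply (dist_le_of_cball Hmetric); eauto; [apply Hball1, Hp1 | apply Hball2, Hp2].
  - exact (dist_set_le_hausdorff_r d C1 C2 p2 e1 (proj1 Hp2) He1).
  - exact (dist_set_le_hausdorff_l d C1 C2 p1 e2 (proj1 Hp1) He2).
Qed.
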